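(* Let $\dot x = Ax+\sum_{i=1}^mB_iu_i$, $y_i=C_ix$ be an $n$-dimensional, jointly controllable and jointly observable $m$-channel continuous-time linear system whose neighbor graph is weakly connected. Let nonnegative integers $n_1,\dots,n_m$ be given and let $\{\bar A,\bar B_i,\bar C_i;m\}$ be the extended system with $\bar A=\begin{bmatrix}A&0\\0&0\end{bmatrix}$ ($\bar n\times\bar n$, $\bar n=n+\sum_in_i$), $\bar B_i=\begin{bmatrix}B_i&0\\0&E_i\end{bmatrix}$, $\bar C_i=\begin{bmatrix}C_i&0\\0&E_{\mathcal{N}_i}'\end{bmatrix}$, where $E_i$ is the $(\sum_kn_k)\times n_i$ block column matrix with $I_{n_i}$ as its $i$th block and zeros elsewhere, and $E_{\mathbf{s}}=[E_{i_1}\ \cdots\ E_{i_s}]$ for $\mathbf{s}=\{i_1<\dots<i_s\}$. Suppose $$n_i\ \ge\ n-\min_{\mathbf{s}\subset\{1,\dots,m\},\ \lambda\in\sigma(A)}\mathrm{rank}\begin{bmatrix}\lambda I_n-A & B_{\mathbf{s}}\\ C_{\{1,\dots,m\}-\mathbf{s}}&0\end{bmatrix}\quad\text{for all } i.$$ Then $\{\bar A,\bar B_i,\bar C_i;m\}$ has no fixed spectrum if and only if $\mathcal{N}_{\{1,\dots,m\}-\mathbf{s}}\cap\mathbf{s}\neq\emptyset$ for every subset $\mathbf{s}\subset\{1,\dots,m\}$ for which there is some $\lambda\in\sigma(A)$ with $\mathrm{rank}\begin{bmatrix}\lambda I_n-A&B_{\mathbf{s}}\\C_{\{1,\dots,m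\}-\mathbf{s}}&0\end{bmatrix}<n$.
   Context: Jointly controllable: $(A,[B_1\ \cdots\ B_m])$ controllable; jointly observable: $(\mathrm{column}\{C_1,\dots,C_m\},A)$ observable. The neighbor graph is a directed graph on $\{1,\dots,m\}$ with an arc $j\to i$ iff $j$ is a neighbor of $i$; $\mathcal{N}_i$ is the set of neighbors of $i$ including $i$, and $\mathcal{N}_{\mathbf{s}}=\bigcup_{i\in\mathbf{s}}\mathcal{N}_i$. A directed graph is weakly connected if removing self-arcs and replacing arcs by undirected edges yields a connected graph. $B_{\mathbf{s}}=[B_{i_1}\ \cdots\ B_{i_s}]$, $C_{\mathbf{s}}=\mathrm{column}\{C_{i_1},\dots,C_{i_s}\}$ for $\mathbf{s}=\{i_1<\dots<i_s\}$. The fixed spectrum of $\{A,B_i,C_i;m\}$ is the set of eigenvalues of $A+\sum_iB_iF_iC_i$ that do not change as the real matrices $F_i$ range over all values. *)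

From HB Require Import structures.
From mathcomp Require Import all_boot all_order all_algebra.
From mathcomp Require Import complex.
From mathcomp Require Import reals.

Set Implicit Arguments.
Unset Strict Implicit.
Unset Printing Implicit Defensive.

Import Order.TTheory GRing.Theory Num.Theory.
Local Open Scope ring_scope.

Definition cmx (R : realType) (p q : nat) (M : 'M[R]_(p, q)) : 'M[R[i]]_(p, q) :=
  map_mx (fun x : R => Complex x 0) M.

Definition spec (R : realType) (n : nat) (A : 'M[R]_n) (lam : R[i]) : Prop :=
  eigenvalue (cmx A) lam.

Definition controllable (R : realType) (n p : nat) (A : 'M[R]_n) (B : 'M[R]_(n, p)) : Prop :=
  \rank (\mxrow_(k < n) (A ^+ k *m B)) = n.

Definition observable (R : realType) (n q : nat) (C : 'M[R]_(q, n)) (A : 'M[R]_n) : Prop :=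
  controllable A^T C^T.

Definition Bsel (R : Type) (m n : nat) (p : 'I_m -> nat)
  (B : forall i : 'I_m, 'M[R]_(n, p i)) (s : {set 'I_m}) :
  'M[R]_(n, \sum_(k < #|s|) p (enum_val k)) :=
  \mxrow_(k < #|s|) B (enum_val k).

Definition Csel (R : Type) (m n : nat) (q : 'I_m -> nat)
  (C : forall i : 'I_m, 'M[R]_(q i, n)) (s : {set 'I_m}) :
  'M[R]_(\sum_(k < #|s|) q (enum_val k), n) :=
  \mxcol_(k < #|s|) C (enum_val k).

Definition pbh_rank (R : realType) (m n : nat) (p q : 'I_m -> nat) (A : 'M[R]_n)
  (B : forall i : 'I_m, 'M[R]_(n, p i)) (C : forall i : 'I_m, 'M[R]_(q i, n))
  (s : {set 'I_m}) (lam : R[i]) : nat :=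
  \rank (block_mx (lam%:M - cmx A) (cmx (Bsel B s))
                  (cmx (Csel C (~: s))) 0).

Definition fixed_eig (R : realType) (m N : nat) (p q : 'I_m -> nat) (A : 'M[R]_N)
  (B : forall i : 'I_m, 'M[R]_(N, p i)) (C : forall i : 'I_m, 'M[R]_(q i, N))
  (lam : R[i]) : Prop :=
  forall F : forall i : 'I_m, 'M[R]_(p i, q i),
    spec (A + \sum_(i < m) B i *m F i *m C i) lam.

Definition no_fixed_spectrum (R : realType) (m N : nat) (p q : 'I_m -> nat) (A : 'M[R]_N)
  (B : forall i : 'I_m, 'M[R]_(N, p i)) (C : forall i : 'I_m, 'M[R]_(q i, N)) : Prop :=
  ~ exists lam : R[i], fixed_eig A B C lam.

Definition Nset (m : nat) (nbr : 'I_m -> {set 'I_m}) (i : 'I_m) : {set 'I_m} :=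
  i |: nbr i.

Definition Nsetof (m : nat) (nbr : 'I_m -> {set 'I_m}) (s : {set 'I_m}) : {set 'I_m} :=
  \bigcup_(i in s) Nset nbr i.

(* neighbor graph: arc j -> i iff j \in nbr i.  Weakly connected: the
   underlying undirected graph (self-loops irrelevant) is connected. *)
Definition weakly_connected (m : nat) (nbr : 'I_m -> {set 'I_m}) : Prop :=
  forall i j : 'I_m,
    connect (fun a b : 'I_m => (b \in nbr a) || (a \in nbr b)) i j.

Definition Eblk (R : pzRingType) (m : nat) (nn : 'I_m -> nat) (i : 'I_m) :
  'M[R]_(\sum_(k < m) nn k, nn i) :=
  \mxcol_(k < m) (\matrix_(a < nn k, b < nn i)
                    ((k == i) && (nat_of_ord a == nat_of_ord b))%:R).

Definition Esel (R : pzRingType) (m : nat) (nn : 'I_m -> nat) (s : {set 'I_m}) :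
  'M[R]_(\sum_(k < m) nn k, \sum_(k < #|s|) nn (enum_val k)) :=
  \mxrow_(k < #|s|) Eblk R nn (enum_val k).

Definition Abar (R : pzRingType) (m n : nat) (nn : 'I_m -> nat) (A : 'M[R]_n) :
  'M[R]_(n + \sum_(k < m) nn k) :=
  block_mx A 0 0 0.

Definition Bbar (R : pzRingType) (m n : nat) (p nn : 'I_m -> nat)
  (B : forall i : 'I_m, 'M[R]_(n, p i)) (i : 'I_m) :
  'M[R]_(n + \sum_(k < m) nn k, p i + nn i) :=
  block_mx (B i) 0 0 (Eblk R nn i).

Definition Cbar (R : pzRingType) (m n : nat) (q nn : 'I_m -> nat)
  (nbr : 'I_m -> {set 'I_m})
  (C : forall i : 'I_m, 'M[R]_(q i, n)) (i : 'I_m) :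
  'M[R]_(q i + \sum_(k < #|Nset nbr i|) nn (enum_val k), n + \sum_(k < m) nn k) :=
  block_mx (C i) 0 0 (Esel R nn (Nset nbr i))^T.

From HB Require Import structures.
From mathcomp Require Import all_boot all_order all_algebra.
From mathcomp Require Import complex.
From mathcomp Require Import reals.
From mathcomp Require Import zify ring.

(* By the Anderson-Clements criterion, lam is a fixed eigenvalue of
   {A, B_i, C_i; m} iff rank [lam I - A, B_s; C_{~s}, 0] < n for some set of
   channels s.  One direction holds because lam I - A - sum_i B_i F_i C_i factors
   through that matrix.  For the other, the channels are closed one at a time by
   real gains: a real G with rank (X + U G V) >= r exists as soon as
   rank [X U] >= r and rank [X; V] >= r (raise the rank by rank-one updates), and
   since such a rank condition fails only at finitely many points of a real line
   through a gain satisfying it, finitely many of them are met by a single gain.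
   For the extended system the criterion's matrix is, up to permutations, the
   direct sum of the original one and [lam I, P_s; P_N, 0], where P_S = Eproj S
   projects onto the auxiliary states of the channels in S and N = N_{~s}; the
   latter has rank sum_k n_k + rank P_{N :&: s}.  Under the bound on the n_i,
   the extended rank thus falls below n + sum_k n_k exactly when the original
   one falls below n and N_{~s} :&: s is empty. *)

Set Implicit Arguments.
Unset Strict Implicit.
Unset Printing Implicit Defensive.

Import Order.TTheory GRing.Theory Num.Theory.
Local Open Scope ring_scope.

(** * Ranks and row spaces of block matrices *)

Section RankLemmas.
Variable F : fieldType.

Lemma submx_col_mxl m1 m2 n (A : 'M[F]_(m1, n)) (B : 'M_(m2, n)) :
  (A <= col_mx A B)%MS.
Proof. by rewrite -addsmxE addsmxSl. Qed.

Lemma submx_col_mxr m1 m2 n (A : 'M[F]_(m1, n)) (B : 'M_(m2, n)) :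
  (B <= col_mx A B)%MS.
Proof. by rewrite -addsmxE addsmxSr. Qed.

Lemma mxrank_block0S a b c1 c2 d1 d2 (M : 'M[F]_(a, b))
    (B1 : 'M_(a, c1)) (B2 : 'M_(a, c2)) (C1 : 'M_(d1, b)) (C2 : 'M_(d2, b)) :
  (B1^T <= B2^T)%MS -> (C1 <= C2)%MS ->
  (\rank (block_mx M B1 C1 0) <= \rank (block_mx M B2 C2 0))%N.
Proof.
move=> /submxP[DB defB] /submxP[DC ->].
have -> : block_mx M B1 (DC *m C2) 0 =
    block_mx 1%:M 0 0 DC *m block_mx M B2 C2 0 *m block_mx 1%:M 0 0 DB^T.
  rewrite !mulmx_block !mul1mx !mul0mx !mulmx0 !mulmx1 !addr0 !add0r.
  by rewrite -[B1]trmxK defB trmx_mul trmxK mul0mx.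
exact: leq_trans (mxrankM_maxl _ _) (mxrankM_maxr _ _).
Qed.

Lemma mxrank_block0_eqmx a b c1 c2 d1 d2 (M : 'M[F]_(a, b))
    (B1 : 'M_(a, c1)) (B2 : 'M_(a, c2)) (C1 : 'M_(d1, b)) (C2 : 'M_(d2, b)) :
  (B1^T :=: B2^T)%MS -> (C1 :=: C2)%MS ->
  \rank (block_mx M B1 C1 0) = \rank (block_mx M B2 C2 0).
Proof.
by move=> eqB eqC; apply/eqP; rewrite eqn_leq !mxrank_block0S // ?eqB ?eqC.
Qed.

Lemma mxrank_block0_ge a b c d (M : 'M[F]_(a, b)) (B : 'M_(a, c))
    (C : 'M_(d, b)) :
  (\rank M <= \rank (block_mx M B C 0))%N.
Proof.
have defM : M = row_mx 1%:M 0 *m block_mx M B C 0 *m col_mx 1%:M 0.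
  by rewrite mul_row_block !mul1mx !mul0mx !addr0 mul_row_col mulmx1 mulmx0 addr0.
rewrite {1}defM; exact: leq_trans (mxrankM_maxl _ _) (mxrankM_maxr _ _).
Qed.

Lemma mxrank_geP a b r (Y : 'M[F]_(a, b)) :
  (r <= \rank Y)%N <->
  exists (P : 'M_(r, a)) (Q : 'M_(b, r)), \det (P *m Y *m Q) != 0.
Proof.
split=> [le_r_Y | [P [Q detPYQ]]]; last first.
  have unitPYQ : P *m Y *m Q \in unitmx by rewrite unitmxE unitfE.
  rewrite -(mxrank_unit unitPYQ).
  exact: leq_trans (mxrankM_maxl _ _) (mxrankM_maxr _ _).
have le_r_a : (r <= a)%N := leq_trans le_r_Y (rank_leq_row _).
have le_r_b : (r <= b)%N := leq_trans le_r_Y (rank_leq_col _).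
exists (pid_mx r *m invmx (col_ebase Y)), (invmx (row_ebase Y) *m pid_mx r).
rewrite -{2}(mulmx_ebase Y) !mulmxA mulmxKV ?col_ebase_unit //.
rewrite -!mulmxA mulKVmx ?row_ebase_unit // !mulmxA !mul_pid_mx.
rewrite (minn_idPl le_r_Y) (minn_idPr le_r_a) minnn (minn_idPr le_r_b).
by rewrite pid_mx_1 det1 oner_neq0.
Qed.

Lemma mxrank_add_outer_gt a b (X : 'M[F]_(a, b)) (u : 'cV_a) (v : 'rV_b) :
  ~~ (u^T <= X^T)%MS -> ~~ (v <= X)%MS -> (\rank X < \rank (X + u *m v)%R)%N.
Proof.
(* If K^T annihilates X but not u, then K^T (X + u v) = (K^T u) v puts v,
   hence also X, in the row space of X + u v. *)
rewrite submxE => uKX_neq0 vX; set K := cokermx X^T in uKX_neq0.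
have [w w_inv] : exists w : 'rV_a, w *m (K^T *m u) = 1%:M.
  have : row_free (u^T *m K) by rewrite /row_free rank_rV uKX_neq0.
  case/row_freeP=> W uKW; exists W^T.
  by rewrite -[u]trmxK -!trmx_mul uKW trmx1.
have KtX : K^T *m X = 0 by rewrite -[LHS]trmxK trmx_mul trmxK mulmx_coker trmx0.
have v_sub : (v <= (X + u *m v)%R)%MS.
  have defv : v = w *m K^T *m (X + u *m v).
    by rewrite mulmxDr -(mulmxA w) KtX mulmx0 add0r mulmxA -(mulmxA w) w_inv mul1mx.
  by rewrite {1}defv submxMl.
have X_sub : (X <= (X + u *m v)%R)%MS.
  rewrite -[X in (X <= _)%MS](addrK (u *m v)) addmx_sub // -mulNmx.
  exact: submx_trans (submxMl _ _) v_sub.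
have Xv_sub : (col_mx X v <= (X + u *m v)%R)%MS by rewrite col_mx_sub X_sub.
apply: (leq_trans _ (mxrankS Xv_sub)).
by apply: rank_ltmx; rewrite ltmxE submx_col_mxl col_mx_sub submx_refl.
Qed.

Lemma mxrank_add_delta_gt a b k l (X : 'M[F]_(a, b)) (U : 'M_(a, k))
    (V : 'M_(l, b)) :
  (\rank X < \rank (row_mx X U))%N -> (\rank X < \rank (col_mx X V))%N ->
  exists i j, (\rank X < \rank (X + U *m delta_mx i j *m V)%R)%N.
Proof.
move=> ltXU ltXV.
have [i Ui] : exists i, ~~ ((col i U)^T <= X^T)%MS.
  apply/existsP; move: ltXU; apply: contraLR; rewrite negb_exists -leqNgt.
  move=> /forallP sUX; rewrite -mxrank_tr -[leqRHS]mxrank_tr tr_row_mx.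
  rewrite mxrankS // col_mx_sub submx_refl; apply/row_subP => i.
  by rewrite -tr_col; apply/negbNE.
have [j Vj] : exists j, ~~ (row j V <= X)%MS.
  apply/existsP; move: ltXV; apply: contraLR; rewrite negb_exists -leqNgt.
  move=> /forallP sVX; rewrite mxrankS // col_mx_sub submx_refl.
  by apply/row_subP => j; apply/negbNE.
exists i, j; have -> : U *m delta_mx i j *m V = col i U *m row j V.
  by rewrite colE rowE -!mulmxA (mulmxA (delta_mx i 0)) mul_delta_mx.
exact: mxrank_add_outer_gt.
Qed.

Lemma mxrank_row_mx_perturb a b k l (X : 'M[F]_(a, b)) (U : 'M_(a, k))
    (D : 'M_(k, l)) (V : 'M_(l, b)) :
  \rank (row_mx (X + U *m D *m V)%R U) = \rank (row_mx X U).
Proof.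
have -> : row_mx (X + U *m D *m V) U =
          row_mx X U *m block_mx 1%:M 0 (D *m V) 1%:M.
  by rewrite mul_row_block !mulmx1 mulmx0 add0r mulmxA.
by rewrite mxrankMfree // row_free_unit unitmxE det_lblock !det1 mulr1 unitr1.
Qed.

Lemma mxrank_col_mx_perturb a b k l (X : 'M[F]_(a, b)) (U : 'M_(a, k))
    (D : 'M_(k, l)) (V : 'M_(l, b)) :
  \rank (col_mx (X + U *m D *m V)%R V) = \rank (col_mx X V).
Proof.
rewrite -mxrank_tr -[RHS]mxrank_tr !tr_col_mx raddfD /= !trmx_mul mulmxA.
exact: mxrank_row_mx_perturb.
Qed.

Lemma mxrank_block0_col_mx a b c d d' l (M : 'M[F]_(a, b)) (Bm : 'M_(a, c))
    (Cm : 'M_(d, b)) (Cm' : 'M_(d', b)) (V : 'M_(l, b)) :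
  (Cm' <= col_mx Cm V)%MS ->
  (\rank (block_mx M Bm Cm' 0) <=
   \rank (col_mx (block_mx M Bm Cm 0) (row_mx V 0)))%N.
Proof.
move=> /submxP[D ->]; apply: mxrankS; rewrite !block_mxEv.
set top := row_mx M Bm; set mid := row_mx Cm 0; set bot := row_mx V 0.
have -> : row_mx (D *m col_mx Cm V) 0 = D *m col_mx mid bot.
  by rewrite -[0 in LHS](mulmx0 _ D) -mul_mx_row -col_mx0 -block_mxEh block_mxEv.
rewrite col_mx_sub (submx_trans (submx_col_mxl top mid)) ?submx_col_mxl //=.
apply: submx_trans (submxMl D _) _; rewrite col_mx_sub submx_col_mxr andbT.
exact: submx_trans (submx_col_mxr top mid) (submx_col_mxl _ _).
Qed.

Lemma mxrank_block0_row_mx a b c c' d k (M : 'M[F]_(a, b)) (Bm : 'M_(a, c))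
    (Bm' : 'M_(a, c')) (Cm : 'M_(d, b)) (U : 'M_(a, k)) :
  (Bm'^T <= col_mx Bm^T U^T)%MS ->
  (\rank (block_mx M Bm' Cm 0) <=
   \rank (row_mx (block_mx M Bm Cm 0) (col_mx U 0)))%N.
Proof.
move=> sB; rewrite -mxrank_tr -[leqRHS]mxrank_tr tr_row_mx tr_col_mx.
rewrite !tr_block_mx !trmx0.
exact: mxrank_block0_col_mx.
Qed.

End RankLemmas.

Section RowSpaces.
Variable F : fieldType.

Lemma col_mx_swap_inner_eqmx m1 m2 m3 m4 n (A1 : 'M[F]_(m1, n))
    (A2 : 'M_(m2, n)) (D1 : 'M_(m3, n)) (D2 : 'M_(m4, n)) :
  (col_mx (col_mx A1 A2) (col_mx D1 D2) :=: col_mx (col_mx A1 D1) (col_mx A2 D2))%MS.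
Proof.
apply: eqmx_trans (eqmx_sym (addsmxE _ _)) _.
apply: eqmx_trans (adds_eqmx (eqmx_sym (addsmxE _ _)) (eqmx_sym (addsmxE _ _))) _.
apply: eqmx_trans _ (addsmxE _ _).
apply: eqmx_trans _ (adds_eqmx (addsmxE _ _) (addsmxE _ _)).
by rewrite -!addsmxA [(A2 + _)%MS]addsmxA [(A2 + D1)%MS]addsmxC -addsmxA.
Qed.

Lemma mxrank_block0_diag a1 a2 b1 b2 c1 c2 d1 d2 (M1 : 'M[F]_(a1, b1))
    (M2 : 'M_(a2, b2)) (B1 : 'M_(a1, c1)) (B2 : 'M_(a2, c2)) (C1 : 'M_(d1, b1))
    (C2 : 'M_(d2, b2)) :
  \rank (block_mx (block_mx M1 0 0 M2) (block_mx B1 0 0 B2) (block_mx C1 0 0 C2) 0) =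
  (\rank (block_mx M1 B1 C1 0) + \rank (block_mx M2 B2 C2 0))%N.
Proof.
(* [col_mx S1 S2] permutes the columns of the direct sum into the order of the
   interleaved matrix; the rows are then matched up to order. *)
pose S1 : 'M[F]_(b1 + c1, (b1 + b2) + (c1 + c2)) :=
  block_mx (row_mx 1%:M 0) 0 0 (row_mx 1%:M 0).
pose S2 : 'M[F]_(b2 + c2, (b1 + b2) + (c1 + c2)) :=
  block_mx (row_mx 0 1%:M) 0 0 (row_mx 0 1%:M).
have S_free : row_free (col_mx S1 S2).
  apply/row_freeP; exists (row_mx S1^T S2^T).
  rewrite mul_col_row /S1 /S2 !tr_block_mx !tr_row_mx !trmx1 !trmx0 !mulmx_block.
  rewrite !mul_row_col !mulmx1 !mulmx0 !mul0mx ?addr0 ?add0r ?row_mx0 ?col_mx0.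
  by rewrite !block_mx0 -!scalar_mx_block.
rewrite -rank_diag_block_mx -(mxrankMfree _ S_free) mul_block_col !mul0mx addr0 add0r.
apply/eqmx_rank.
rewrite !block_mxEv !mul_col_mx !mul_row_block !mulmx0 !mul_mx_row !mulmx1.
rewrite !mulmx0 ?addr0 ?add0r.
rewrite -[X in row_mx (col_mx (row_mx C1 0) _) X]col_mx0 -!block_mxEh !block_mxEv.
by rewrite !row_mx0; apply/eqmxP; apply: col_mx_swap_inner_eqmx.
Qed.

Lemma diag_block_mxS m1 m2 m3 m4 n1 n2 (X : 'M[F]_(m1, n1)) (X' : 'M_(m2, n1))
    (Y : 'M_(m3, n2)) (Y' : 'M_(m4, n2)) :
  (X <= X')%MS -> (Y <= Y')%MS -> (block_mx X 0 0 Y <= block_mx X' 0 0 Y')%MS.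
Proof.
move=> /submxP[D ->] /submxP[D' ->].
have -> : block_mx (D *m X') 0 0 (D' *m Y') =
          block_mx D 0 0 D' *m block_mx X' 0 0 Y'.
  by rewrite mulmx_block !mulmx0 !mul0mx !addr0 !add0r.
exact: submxMl.
Qed.

Lemma sumsmx_diag_block (I : finType) (P : pred I) (a b : I -> nat) n1 n2
    (X : forall i, 'M[F]_(a i, n1)) (Y : forall i, 'M[F]_(b i, n2)) :
  (\sum_(i | P i) <<block_mx (X i) 0 0 (Y i)>> :=:
   block_mx (\sum_(i | P i) <<X i>>)%MS 0 0 (\sum_(i | P i) <<Y i>>)%MS)%MS.
Proof.
apply/eqmxP/andP; split.
  apply/sumsmx_subP => i Pi; rewrite genmxE.
  by apply: diag_block_mxS; apply: (sumsmx_sup i) => //; rewrite genmxE.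
have sub_block i : P i ->
    (block_mx (X i) 0 0 (Y i) <= \sum_(j | P j) <<block_mx (X j) 0 0 (Y j)>>)%MS.
  by move=> Pi; rewrite (sumsmx_sup i) // genmxE.
have row_mx0E k l l' (Z : 'M[F]_(k, l)) :
    row_mx Z (0 : 'M_(k, l')) = Z *m row_mx 1%:M 0.
  by rewrite mul_mx_row mulmx1 mulmx0.
have row_0mxE k l l' (Z : 'M[F]_(k, l)) :
    row_mx (0 : 'M_(k, l')) Z = Z *m row_mx 0 1%:M.
  by rewrite mul_mx_row mulmx1 mulmx0.
rewrite block_mxEv col_mx_sub row_mx0E row_0mxE !sumsmxMr_gen.
apply/andP; split; apply/sumsmx_subP => i Pi; rewrite genmxE (eqmxMr _ (genmxE _)).
  by rewrite -row_mx0E (submx_trans _ (sub_block i Pi)) // block_mxEv submx_col_mxl.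
by rewrite -row_0mxE (submx_trans _ (sub_block i Pi)) // block_mxEv submx_col_mxr.
Qed.

Lemma diag_block_eqmx m1 m2 m3 m4 n1 n2 (X : 'M[F]_(m1, n1)) (X' : 'M_(m2, n1))
    (Y : 'M_(m3, n2)) (Y' : 'M_(m4, n2)) :
  (X :=: X')%MS -> (Y :=: Y')%MS -> (block_mx X 0 0 Y :=: block_mx X' 0 0 Y')%MS.
Proof. by move=> eqX eqY; apply/eqmxP; rewrite !diag_block_mxS ?eqX ?eqY. Qed.

Lemma mxcol_enum_eqmx m c (r : 'I_m -> nat) (Z : forall i, 'M[F]_(r i, c))
    (S : {set 'I_m}) :
  (\mxcol_(k < #|S|) Z (enum_val k) :=: \sum_(i in S) <<Z i>>)%MS.
Proof.
have Z_sub i : i \in S -> (Z i <= \sum_(j in S) <<Z j>>)%MS.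
  by move=> iS; rewrite (sumsmx_sup i) // genmxE.
apply/eqmxP/andP; split.
  apply/row_subP => x; rewrite row_mxcol.
  exact: submx_trans (row_sub _ _) (Z_sub _ (enum_valP _)).
apply/sumsmx_subP => i iS; rewrite genmxE.
have Zk_sub (k : 'I_#|S|) :
    (Z (enum_val k) <= \mxcol_(k < #|S|) Z (enum_val k))%MS.
  rewrite -[X in (X <= _)%MS](mxcolK (fun k => Z (enum_val k)) k).
  by apply/row_subP => y; rewrite /submxcol row_rowsub row_sub.
by have := Zk_sub (enum_rank_in iS i); rewrite enum_rankK_in.
Qed.

End RowSpaces.

Lemma eigenvalue_rank (F : fieldType) N (g : 'M[F]_N) a :
  eigenvalue g a = (\rank (a%:M - g)%R < N)%N.
Proof.
rewrite /eigenvalue /eigenspace kermx_eq0 /row_free -mxrank_opp opprB.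
by rewrite ltn_neqAle rank_leq_row andbT.
Qed.

(** * Real gains in general position *)

Section RealGains.
Variable R : realType.
Local Open Scope complex_scope.
Local Notation cm := (map_mx (real_complex R)).

Lemma cmxE a b (M : 'M[R]_(a, b)) : cmx M = cm M.
Proof. by apply/matrixP => i j; rewrite !mxE. Qed.

Lemma exists_real_gain_rank_ge a b k l r (X : 'M[R[i]]_(a, b)) (U : 'M_(a, k))
    (V : 'M_(l, b)) :
  (r <= \rank (row_mx X U))%N -> (r <= \rank (col_mx X V))%N ->
  exists G : 'M[R]_(k, l), (r <= \rank (X + U *m cm G *m V)%R)%N.
Proof.
have [d] := ubnP (r - \rank X)%N; elim: d X => // d IHd X lt_rX_d le_rXU le_rXV.
have [le_rX | lt_Xr] := leqP r (\rank X).
  by exists 0; rewrite map_mx0 mulmx0 mul0mx addr0.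
have [i [j lt_X_Xij]] :=
  mxrank_add_delta_gt (leq_trans lt_Xr le_rXU) (leq_trans lt_Xr le_rXV).
have [G le_r_XijG] : exists G : 'M[R]_(k, l),
    (r <= \rank (X + U *m delta_mx i j *m V + U *m cm G *m V)%R)%N.
  apply: IHd; last by rewrite mxrank_col_mx_perturb.
    exact: leq_trans (ltn_sub2l lt_Xr lt_X_Xij) lt_rX_d.
  by rewrite mxrank_row_mx_perturb.
exists (delta_mx i j + G).
by rewrite map_mxD map_delta_mx mulmxDr mulmxDl addrA.
Qed.

(* A substitute for Zariski openness that only needs univariate polynomials. *)
Definition line_generic k l (phi : 'M[R]_(k, l) -> Prop) :=
  forall F0 F1, phi F0 -> exists2 p : {poly R[i]}, p.[0] != 0 &
    forall t : R, p.[t%:C] != 0 -> phi (F0 + t *: (F1 - F0)).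

Lemma poly_real_nonroot (p : {poly R[i]}) :
  p != 0 -> exists t : R, p.[t%:C] != 0.
Proof.
move=> p_neq0.
have [k pk | no_root] := pickP (fun k : 'I_(size p) => p.[(k%:R : R)%:C] != 0).
  by exists k%:R.
pose pts := [seq (k%:R : R)%:C | k <- iota 0 (size p)].
have pts_roots : all (root p) pts.
  apply/allP => z /mapP[k]; rewrite mem_iota => /andP[_ lt_k_p] ->.
  by have /negbFE := no_root (Ordinal lt_k_p).
have pts_uniq : uniq pts.
  rewrite map_inj_uniq ?iota_uniq // => x y /complexI/eqP.
  by rewrite eqr_nat => /eqP.
by have := max_poly_roots p_neq0 pts_roots pts_uniq; rewrite size_map size_iota ltnn.
Qed.

Lemma line_generic_all (T : eqType) k l (phi : T -> 'M[R]_(k, l) -> Prop)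
    (s : seq T) :
  (forall x, x \in s -> line_generic (phi x)) ->
  line_generic (fun F => forall x, x \in s -> phi x F).
Proof.
elim: s => [|y s IHs] gen_phi F0 F1 phiF0.
  by exists 1 => [|t _ x //]; rewrite hornerC oner_neq0.
have sub_s : {subset s <= y :: s} by move=> x xs; rewrite in_cons xs orbT.
have [p p0_neq0 p_ok] := gen_phi y (mem_head y s) F0 F1 (phiF0 y (mem_head y s)).
have [q q0_neq0 q_ok] :=
  IHs (fun x xs => gen_phi x (sub_s x xs)) F0 F1 (fun x xs => phiF0 x (sub_s x xs)).
exists (p * q) => [|t]; first by rewrite hornerM mulf_neq0.
rewrite hornerM mulf_eq0 negb_or => /andP[/p_ok phi_y /q_ok phi_s] x.
by rewrite in_cons => /predU1P[-> | /phi_s].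
Qed.

Lemma line_generic_meet k l (phi psi : 'M[R]_(k, l) -> Prop) F0 F1 :
  line_generic phi -> line_generic psi -> phi F0 -> psi F1 ->
  exists F, phi F /\ psi F.
Proof.
move=> gen_phi gen_psi phiF0 psiF1.
have [p p0_neq0 p_ok] := gen_phi F0 F1 phiF0.
have [q q0_neq0 q_ok] := gen_psi F1 F0 psiF1.
have p_neq0 : p != 0 by apply: contraNneq p0_neq0 => ->; rewrite horner0.
(* The line from F1 through F0 is the line from F0 through F1 run backwards. *)
have q_neq0 : q \Po (1 - 'X) != 0.
  apply: contraNneq q0_neq0 => /(congr1 (horner^~ 1)).
  by rewrite horner_comp !hornerE subrr => ->.
have [t] := poly_real_nonroot (mulf_neq0 p_neq0 q_neq0).
rewrite hornerM mulf_eq0 negb_or horner_comp !hornerE => /andP[pt_neq0 qt_neq0].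
exists (F0 + t *: (F1 - F0)); split; first exact: p_ok.
have -> : F0 + t *: (F1 - F0) = F1 + (1 - t) *: (F0 - F1).
  by apply/matrixP => x y; rewrite !mxE; ring.
by apply: q_ok; rewrite rmorphB rmorph1.
Qed.

Lemma line_generic_forall (T : eqType) k l (phi : T -> 'M[R]_(k, l) -> Prop)
    (s : seq T) :
  (forall x, x \in s -> line_generic (phi x)) ->
  (forall x, x \in s -> exists F, phi x F) ->
  exists F, forall x, x \in s -> phi x F.
Proof.
elim: s => [|y s IHs] gen_phi sat_phi; first by exists 0.
have sub_s : {subset s <= y :: s} by move=> x xs; rewrite in_cons xs orbT.
have [F phi_s] := IHs (fun x xs => gen_phi x (sub_s x xs))
                      (fun x xs => sat_phi x (sub_s x xs)).
have [G phi_y] := sat_phi y (mem_head y s).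
have [H [phi_s_H phi_y_H]] := line_generic_meet
  (line_generic_all (fun x xs => gen_phi x (sub_s x xs)))
  (gen_phi y (mem_head y s)) phi_s phi_y.
by exists H => x; rewrite in_cons => /predU1P[-> | /phi_s_H].
Qed.

Lemma det_affine_poly a b r (P : 'M[R[i]]_(r, a)) (Y0 Y1 : 'M_(a, b))
    (Q : 'M_(b, r)) :
  exists p : {poly R[i]}, forall z, p.[z] = \det (P *m (Y0 + z *: Y1) *m Q).
Proof.
exists (\det (map_mx polyC P *m (map_mx polyC Y0 + 'X *: map_mx polyC Y1)
              *m map_mx polyC Q)) => z.
rewrite -horner_evalE -det_map_mx !map_mxM.
congr (\det (_ *m _ *m _)); apply/matrixP => i j.
all: by rewrite !mxE /= horner_evalE !hornerE.
Qed.

Lemma line_generic_rank_ge a b k l r (X : 'M[R[i]]_(a, b)) (U : 'M_(a, k))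
    (V : 'M_(l, b)) :
  line_generic (fun G : 'M[R]_(k, l) => (r <= \rank (X + U *m cm G *m V)%R)%N).
Proof.
move=> G0 G1 /mxrank_geP[P [Q detPQ]].
have [p p_det] :=
  det_affine_poly P (X + U *m cm G0 *m V) (U *m cm (G1 - G0) *m V) Q.
exists p => [|t pt_neq0]; first by rewrite p_det scale0r addr0.
apply/mxrank_geP; exists P, Q.
have -> : (X + U *m cm (G0 + t *: (G1 - G0)) *m V =
           X + U *m cm G0 *m V + t%:C *: (U *m cm (G1 - G0) *m V))%R.
  by rewrite map_mxD map_mxZ mulmxDr mulmxDl addrA -scalemxAr -scalemxAl.
by rewrite -p_det.
Qed.

End RealGains.

(** * The Anderson-Clements criterion *)

Section ChannelSpaces.
Variables (F : fieldType) (n m : nat) (p q : 'I_m -> nat).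
Variables (B : forall i, 'M[F]_(n, p i)) (C : forall i, 'M[F]_(q i, n)).

(* [(Bspace s)^T] has the column space of [B_s], and [Cspace s] the row space
   of [C_s]. *)
Definition Bspace (s : {set 'I_m}) : 'M[F]_n := (\sum_(i in s) <<(B i)^T>>)%MS.
Definition Cspace (s : {set 'I_m}) : 'M[F]_n := (\sum_(i in s) <<C i>>)%MS.

Lemma Bspace_sup i (s : {set 'I_m}) : i \in s -> ((B i)^T <= Bspace s)%MS.
Proof. by move=> i_s; apply: (sumsmx_sup i) => //; rewrite genmxE. Qed.

Lemma Cspace_sup i (s : {set 'I_m}) : i \in s -> (C i <= Cspace s)%MS.
Proof. by move=> i_s; apply: (sumsmx_sup i) => //; rewrite genmxE. Qed.

Lemma Bspace0 : Bspace set0 = 0.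
Proof. by rewrite /Bspace big_set0. Qed.

Lemma Cspace0 : Cspace set0 = 0.
Proof. by rewrite /Cspace big_set0. Qed.

Lemma closed_loop_rank_lt (s : {set 'I_m}) (M : 'M[F]_n)
    (D : forall i, 'M[F]_(p i, q i)) :
  (\rank (block_mx M (Bspace s)^T (Cspace (~: s)) 0) < n)%N ->
  (\rank (M + \sum_i B i *m D i *m C i)%R < n)%N.
Proof.
move=> rank_lt; rewrite (bigID (mem s)) /=.
set Ss := \sum_(i in s) _; set Sc := \sum_(i | i \notin s) _.
have [DB defSs] : exists DB, Ss = (Bspace s)^T *m DB.
  have : (Ss^T <= Bspace s)%MS.
    rewrite raddf_sum; apply: summx_sub => i i_s; rewrite /= !trmx_mul mulmxA.
    exact: submx_trans (submxMl _ _) (Bspace_sup i_s).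
  by case/submxP => D' defSt; exists D'^T; rewrite -[Ss]trmxK defSt trmx_mul.
have [DC defSc] : exists DC, Sc = DC *m Cspace (~: s).
  apply/submxP; apply: summx_sub => i i_s.
  by apply: submx_trans (submxMl _ _) (Cspace_sup _); rewrite inE.
have -> : (M + (Ss + Sc) = row_mx 1%:M DC *m
             block_mx M (Bspace s)^T (Cspace (~: s)) 0 *m col_mx 1%:M DB)%R.
  rewrite mul_row_block !mul1mx mulmx0 addr0 mul_row_col mulmx1 defSs defSc.
  by rewrite addrAC addrA.
exact: leq_ltn_trans (mxrankM_maxl _ _) (leq_ltn_trans (mxrankM_maxr _ _) rank_lt).
Qed.

End ChannelSpaces.

Section ClosingChannels.
Variables (R : realType) (n m : nat) (p q : 'I_m -> nat).
Variables (B : forall i, 'M[R[i]]_(n, p i)) (C : forall i, 'M[R[i]]_(q i, n)).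
Local Notation cm := (map_mx (real_complex R)).

Definition split_full_rank (M : 'M[R[i]]_n) (T : {set 'I_m}) :=
  forall s : {set 'I_m}, s \subset T ->
    (n <= \rank (block_mx M (Bspace B s)^T (Cspace C (T :\: s)) 0))%N.

Lemma close_channel j (T : {set 'I_m}) (M : 'M[R[i]]_n) :
  j \notin T -> split_full_rank M (j |: T) ->
  exists G : 'M[R]_(p j, q j), split_full_rank (M + B j *m cm G *m C j)%R T.
Proof.
move=> jNT full_jT.
(* Closing channel j by G adds U G V to X s; the ranks of [X s, U] and [X s; V]
   are bounded below by those of the splits j |: s and s of j |: T. *)
pose X s := block_mx M (Bspace B s)^T (Cspace C (T :\: s)) 0.
pose U := col_mx (B j) (0 : 'M_(n, p j)); pose V := row_mx (C j) (0 : 'M_(q j, n)).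
have XUV s G : (X s + U *m cm G *m V)%R =
    block_mx (M + B j *m cm G *m C j)%R (Bspace B s)^T (Cspace C (T :\: s)) 0.
  by rewrite /X /U /V mul_col_mx mul0mx mul_col_row !mulmx0 mul0mx add_block_mx !addr0.
pose phi s G := (n <= \rank (X s + U *m cm G *m V)%R)%N.
suff [G full_G] : exists G, forall s, s \in enum (powerset T) -> phi s G.
  by exists G => s sT; rewrite -XUV; apply: full_G; rewrite mem_enum powersetE.
apply: line_generic_forall => [s _ | s]; first exact: line_generic_rank_ge.
rewrite mem_enum powersetE => sT; apply: exists_real_gain_rank_ge.
  have jTjs : (j |: T) :\: (j |: s) = T :\: s.
    apply/setP => i; rewrite !inE.
    by case: eqP => [-> | _]; rewrite ?(negbTE jNT) ?andbF.
  have := full_jT (j |: s) (setUS _ sT); rewrite jTjs => /leq_trans; apply.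
  apply: mxrank_block0_row_mx; rewrite !trmxK; apply/sumsmx_subP => i.
  rewrite genmxE => /setU1P[-> | i_s]; first exact: submx_col_mxr.
  exact: submx_trans (Bspace_sup B i_s) (submx_col_mxl _ _).
have := full_jT s (subset_trans sT (subsetUr _ _)) => /leq_trans; apply.
apply: mxrank_block0_col_mx; apply/sumsmx_subP => i.
rewrite genmxE !inE => /andP[iNs /predU1P[-> | iT]]; first exact: submx_col_mxr.
by apply: submx_trans (Cspace_sup C _) (submx_col_mxl _ _); rewrite !inE iNs.
Qed.

Lemma exists_gains_full_rank (T : {set 'I_m}) (M : 'M[R[i]]_n) :
  split_full_rank M T ->
  exists G : forall i, 'M[R]_(p i, q i),
    (n <= \rank (M + \sum_(i in T) B i *m cm (G i) *m C i)%R)%N.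
Proof.
have [k] := ubnP #|T|; elim: k T M => // k IHk T M lt_T_k full_T.
have [T0 | [j jT]] := set_0Vmem T.
  exists (fun=> 0); rewrite T0 big_set0 addr0.
  have := full_T set0 (sub0set _); rewrite T0 setD0 Bspace0 Cspace0 trmx0.
  by rewrite rank_diag_block_mx mxrank0 addn0.
have jNTj : j \notin T :\ j by rewrite setD11.
rewrite -(setD1K jT) in full_T; have [Gj full_Gj] := close_channel jNTj full_T.
have lt_Tj_k : (#|T :\ j| < k)%N by rewrite (cardsD1 j T) jT in lt_T_k.
have [G rank_G] := IHk _ _ lt_Tj_k full_Gj.
exists (dfwith G Gj); rewrite (big_setD1 j jT) /= dfwith_in addrA.
rewrite (eq_bigr (fun i => B i *m cm (G i) *m C i)) // => i.
by rewrite in_setD1 => /andP[ij _]; rewrite dfwith_out // eq_sym.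
Qed.

End ClosingChannels.

Section FixedEigenvalues.
Variables (R : realType) (N m : nat) (p q : 'I_m -> nat) (A : 'M[R]_N).
Variables (B : forall i, 'M[R]_(N, p i)) (C : forall i, 'M[R]_(q i, N)).
Local Notation cm := (map_mx (real_complex R)).

Lemma fixed_eigP (lam : R[i]) :
  fixed_eig A B C lam <->
  exists s, (\rank (block_mx (lam%:M - cmx A)%R (Bspace (fun i => cmx (B i)) s)^T
                             (Cspace (fun i => cmx (C i)) (~: s)) 0) < N)%N.
Proof.
have closed_loopE (G : forall i, 'M[R]_(p i, q i)) :
    (lam%:M - cmx (A + \sum_i B i *m G i *m C i) =
     lam%:M - cmx A + \sum_i cmx (B i) *m cm (- G i) *m cmx (C i))%R.
  rewrite !cmxE map_mxD map_mx_sum opprD -sumrN addrA; congr (_ + _).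
  by apply: eq_bigr => i _; rewrite !cmxE !map_mxM map_mxN mulmxN mulNmx.
split=> [fixed_lam | [s rank_lt] G]; last first.
  rewrite /spec eigenvalue_rank closed_loopE.
  exact: closed_loop_rank_lt rank_lt.
apply/existsP; apply: contraT; rewrite negb_exists => /forallP full.
have full_setT : split_full_rank (fun i => cmx (B i)) (fun i => cmx (C i))
                   (lam%:M - cmx A)%R [set: 'I_m].
  by move=> s _; rewrite setTD leqNgt full.
have [G] := exists_gains_full_rank full_setT; under eq_bigl do rewrite in_setT.
move=> rank_G; have := fixed_lam (fun i => - G i).
rewrite /spec eigenvalue_rank closed_loopE ltnNge.
by under eq_bigr do rewrite opprK; rewrite rank_G.
Qed.

End FixedEigenvalues.

(** * The extended system *)

Section BlockProjectors.
Variables (F : fieldType) (m : nat) (nn : 'I_m -> nat).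
Local Notation nu := (\sum_(k < m) nn k)%N.
Local Notation E := (Eblk F nn).
Implicit Types S T : {set 'I_m}.

Let blk k i : 'M[F]_(nn k, nn i) :=
  \matrix_(a < nn k, b < nn i) ((k == i) && (nat_of_ord a == nat_of_ord b))%:R.

Let EblkE i : E i = \mxcol_k blk k i. Proof. by []. Qed.

Let blk_neq k i : k != i -> blk k i = 0.
Proof. by move=> ki; apply/matrixP => a b; rewrite !mxE (negbTE ki). Qed.

Let blk_id i : blk i i = 1%:M.
Proof. by apply/matrixP => a b; rewrite !mxE eqxx. Qed.

Lemma trEblk_mul_id i : (E i)^T *m E i = 1%:M.
Proof.
rewrite EblkE tr_mxcol mul_mxrow_mxcol (bigD1 i) //= big1 ?addr0.
  by rewrite blk_id trmx1 mul1mx.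
by move=> k ki; rewrite blk_neq // trmx0 mul0mx.
Qed.

Lemma trEblk_mul0 i j : i != j -> (E i)^T *m E j = 0.
Proof.
move=> ij; rewrite (EblkE i) (EblkE j) tr_mxcol mul_mxrow_mxcol big1 // => k _.
have [-> | ki] := eqVneq k i; first by rewrite (blk_neq ij) mulmx0.
by rewrite blk_neq // trmx0 mul0mx.
Qed.

Lemma sum_Eblk_trEblk : \sum_i E i *m (E i)^T = 1%:M.
Proof.
have -> : \sum_i E i *m (E i)^T = \sum_i \mxblock_(k, l) (blk k i *m (blk l i)^T).
  by apply: eq_bigr => i _; rewrite EblkE tr_mxcol mul_mxcol_mxrow.
rewrite -mxblock_sum -(mxdiagZ (p_ := nn) 1); apply: eq_mxblock => k l.
have [<- | kl] := eqVneq k l.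
  rewrite (bigD1 k) //= big1 ?addr0; first by rewrite blk_id trmx1 mul1mx conform_mx_id.
  by move=> i ik; rewrite (@blk_neq k i) ?mul0mx // eq_sym.
apply: big1 => i _; have [-> | ik] := eqVneq i k.
  by rewrite (@blk_neq l k) ?trmx0 ?mulmx0 // eq_sym.
by rewrite (@blk_neq k i) ?mul0mx // eq_sym.
Qed.

Definition Eproj (S : {set 'I_m}) : 'M[F]_nu := \sum_(i in S) E i *m (E i)^T.

Lemma Eproj0 : Eproj set0 = 0.
Proof. by rewrite /Eproj big_set0. Qed.

Lemma Eproj_tr S : (Eproj S)^T = Eproj S.
Proof. by rewrite /Eproj raddf_sum; apply: eq_bigr => i _; rewrite /= trmx_mul trmxK. Qed.

Lemma trEblk_Eproj k S : (E k)^T *m Eproj S = if k \in S then (E k)^T else 0.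
Proof.
rewrite /Eproj mulmx_sumr; case: ifPn => [kS | kNS].
  rewrite (big_setD1 k kS) /= mulmxA trEblk_mul_id mul1mx [X in _ + X]big1 ?addr0 // => i.
  by rewrite !inE => /andP[ik _]; rewrite mulmxA trEblk_mul0 ?mul0mx // eq_sym.
apply: big1 => i iS; rewrite mulmxA trEblk_mul0 ?mul0mx //.
by apply: contraNneq kNS => ->.
Qed.

Lemma EprojM S T : Eproj S *m Eproj T = Eproj (S :&: T).
Proof.
rewrite {1}/Eproj mulmx_suml (eq_bigr (fun i => if i \in T then E i *m (E i)^T else 0)).
  by rewrite -big_mkcondr /Eproj; apply: eq_bigl => i; rewrite inE.
by move=> i _; rewrite -mulmxA trEblk_Eproj; case: (i \in T); rewrite ?mulmx0.
Qed.

Lemma Eproj_add_setC S : Eproj S + Eproj (~: S) = 1%:M.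
Proof.
apply: etrans sum_Eblk_trEblk.
rewrite (bigID (mem S) predT (fun i => E i *m (E i)^T)) /=; congr (_ + _).
by apply: eq_bigl => i; rewrite inE.
Qed.

Lemma trEblk_sub_Eproj k S : k \in S -> ((E k)^T <= Eproj S)%MS.
Proof. by move=> kS; have := submxMl (E k)^T (Eproj S); rewrite trEblk_Eproj kS. Qed.

Lemma Eproj_eqmx S : (Eproj S :=: \sum_(i in S) <<(E i)^T>>)%MS.
Proof.
apply/eqmxP/andP; split; last first.
  by apply/sumsmx_subP => i iS; rewrite genmxE trEblk_sub_Eproj.
apply: summx_sub => i iS; apply: submx_trans (submxMl _ _) _.
by apply: (sumsmx_sup i) => //; rewrite genmxE.
Qed.

Lemma mxrank_Eproj_ge k S : k \in S -> (nn k <= \rank (Eproj S))%N.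
Proof.
move=> kS; apply: leq_trans (mxrankS (trEblk_sub_Eproj kS)).
by rewrite -{1}(mxrank1 F (nn k)) -(trEblk_mul_id k) mxrankM_maxl.
Qed.

Lemma mxrank_Eproj_cap S T : \rank (Eproj S :&: Eproj T)%MS = \rank (Eproj (S :&: T)).
Proof.
apply/eqP; rewrite eqn_leq; apply/andP; split; last first.
  rewrite mxrankS // sub_capmx; apply/andP; split; last by rewrite -EprojM submxMl.
  by rewrite setIC -EprojM submxMl.
apply: mxrankS.
have [DS defWS] := submxP (capmxSl (Eproj S) (Eproj T)).
have [DT defWT] := submxP (capmxSr (Eproj S) (Eproj T)).
set W := (Eproj S :&: Eproj T)%MS in defWS defWT *.
have WT : W *m Eproj T = W by rewrite defWT -mulmxA EprojM setIid.
by rewrite -WT {1}defWS -mulmxA EprojM submxMl.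
Qed.

Lemma mxrank_Eproj_antidiag S T : ~: S \subset T ->
  \rank (block_mx 0 (Eproj S) (Eproj T) 0) = (nu + \rank (Eproj (T :&: S)))%N.
Proof.
move=> sCS_T; pose W := block_mx 0 1%:M 1%:M 0 : 'M[F]_(nu + nu).
have W_free : row_free W.
  apply/row_freeP; exists W.
  by rewrite mulmx_block !mulmx0 !mul0mx !mulmx1 !addr0 !add0r -scalar_mx_block.
rewrite -(mxrankMfree _ W_free) mulmx_block !mulmx0 !mul0mx !mulmx1 !addr0 !add0r.
rewrite rank_diag_block_mx -mxrank_sum_cap mxrank_Eproj_cap setIC; congr (_ + _)%N.
apply/eqP; rewrite eqn_leq rank_leq_col /= -{1}(mxrank1 F nu) mxrankS //.
rewrite -(Eproj_add_setC S) addmx_sub_adds //.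
by rewrite -(setIidPl sCS_T) -EprojM submxMl.
Qed.

Lemma mxrank_Eproj_block (lam : F) S T : ~: S \subset T ->
  \rank (block_mx lam%:M (Eproj S) (Eproj T) 0) = (nu + \rank (Eproj (T :&: S)))%N.
Proof.
move=> sCS_T; have [-> | lam_neq0] := eqVneq lam 0.
  have -> : (0 : F)%:M = 0 :> 'M_nu by apply/matrixP => i j; rewrite !mxE mul0rn.
  exact: mxrank_Eproj_antidiag.
(* Eliminate the off-diagonal blocks against the invertible corner lam%:M. *)
pose L := block_mx 1%:M 0 (- (lam^-1 *: Eproj T)) (1%:M : 'M[F]_nu).
pose U := block_mx 1%:M (- (lam^-1 *: Eproj S)) 0 (1%:M : 'M[F]_nu).
have L_unit : L \in unitmx by rewrite unitmxE det_lblock !det1 mulr1 unitr1.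
have U_unit : U \in unitmx by rewrite unitmxE det_ublock !det1 mulr1 unitr1.
set X := block_mx _ _ _ _.
have -> : \rank X = \rank (L *m X *m U).
  by rewrite mxrankMfree ?row_free_unit // (eqmxMfull _ _) ?row_full_unit.
have -> : L *m X *m U =
          block_mx lam%:M 0 0 (- (lam^-1 *: (Eproj T *m Eproj S))).
  rewrite /L /U !mulmx_block !mulmx0 !mul0mx !mulmx1 !mul1mx ?addr0 ?add0r.
  rewrite mul_scalar_mx mul_mx_scalar !scalerN !scalerA mulfV // scale1r !addNr.
  by rewrite scale1r addNr mul0mx add0r mulNmx -scalemxAl.
rewrite rank_diag_block_mx mxrank_opp (eqmx_scale _ (invr_neq0 lam_neq0)) EprojM.
by rewrite -scalemx1 (eqmx_scale _ lam_neq0) mxrank1.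
Qed.

End BlockProjectors.

Section ExtendedSystem.
Variables (R : realType) (n m : nat) (p q : 'I_m -> nat) (A : 'M[R]_n).
Variables (B : forall i, 'M[R]_(n, p i)) (C : forall i, 'M[R]_(q i, n)).
Variables (nbr : 'I_m -> {set 'I_m}) (nn : 'I_m -> nat).
Local Notation nu := (\sum_(k < m) nn k)%N.
Local Notation E := (Eblk R[i] nn).
Local Notation Eproj := (Eproj R[i] nn).
Implicit Types (s S : {set 'I_m}) (lam : R[i]).

Lemma pbh_rankE s lam :
  pbh_rank A B C s lam =
  \rank (block_mx (lam%:M - cmx A) (Bspace (fun i => cmx (B i)) s)^T
                  (Cspace (fun i => cmx (C i)) (~: s)) 0).
Proof.
apply: mxrank_block0_eqmx; rewrite ?trmxK.
  have -> : (cmx (Bsel B s))^T = \mxcol_(k < #|s|) (cmx (B (enum_val k)))^T.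
    by apply/matrixP => x y; rewrite !mxE.
  exact: mxcol_enum_eqmx (fun i => (cmx (B i))^T) s.
have -> : cmx (Csel C (~: s)) = \mxcol_(k < #|~: s|) cmx (C (enum_val k)).
  by apply/matrixP => x y; rewrite !mxE.
exact: mxcol_enum_eqmx (fun i => cmx (C i)) (~: s).
Qed.

Lemma pbh_rank_lt_spec s lam : (pbh_rank A B C s lam < n)%N -> spec A lam.
Proof.
rewrite /spec eigenvalue_rank pbh_rankE.
exact: leq_ltn_trans (mxrank_block0_ge _ _ _).
Qed.

Lemma map_Eblk i : map_mx (real_complex R) (Eblk R nn i) = E i.
Proof. by apply/matrixP => x y; rewrite !mxE rmorph_nat. Qed.

Lemma map_Esel S : map_mx (real_complex R) (Esel R nn S) = Esel R[i] nn S.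
Proof. by apply/matrixP => x y; rewrite !mxE rmorph_nat. Qed.

Lemma cmx_Bbar i : cmx (Bbar nn B i) = block_mx (cmx (B i)) 0 0 (E i).
Proof. by rewrite !cmxE map_block_mx !map_mx0 map_Eblk. Qed.

Lemma cmx_Cbar i :
  cmx (Cbar nn nbr C i) = block_mx (cmx (C i)) 0 0 (Esel R[i] nn (Nset nbr i))^T.
Proof. by rewrite !cmxE map_block_mx !map_mx0 -map_trmx map_Esel. Qed.

Lemma cmx_Abar lam :
  lam%:M - cmx (Abar nn A) = block_mx (lam%:M - cmx A) 0 0 lam%:M.
Proof.
rewrite !cmxE map_block_mx !map_mx0 (scalar_mx_block n nu lam) opp_block_mx.
by rewrite add_block_mx !oppr0 !addr0.
Qed.

Lemma Bspace_Bbar s :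
  (Bspace (fun i => cmx (Bbar nn B i)) s :=:
   block_mx (Bspace (fun i => cmx (B i)) s) 0 0 (Eproj s))%MS.
Proof.
rewrite /Bspace (eq_bigr (fun i => <<block_mx (cmx (B i))^T 0 0 (E i)^T>>%MS)).
  apply: eqmx_trans (sumsmx_diag_block _ _ _) _.
  exact: diag_block_eqmx (eqmx_refl _) (eqmx_sym (Eproj_eqmx _ _ _)).
by move=> i _; rewrite cmx_Bbar tr_block_mx !trmx0.
Qed.

Lemma sum_trEsel_eqmx s :
  (\sum_(i in s) <<(Esel R[i] nn (Nset nbr i))^T>> :=: Eproj (Nsetof nbr s))%MS.
Proof.
have trEsel_eqmx S : ((Esel R[i] nn S)^T :=: \sum_(k in S) <<(E k)^T>>)%MS.
  by rewrite /Esel tr_mxrow; apply: (mxcol_enum_eqmx (fun k => (E k)^T)).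
apply: eqmx_trans (eqmx_sym (Eproj_eqmx _ _ _)); apply/eqmxP/andP; split.
  apply/sumsmx_subP => i i_s; rewrite genmxE trEsel_eqmx.
  apply/sumsmx_subP => k kNi; rewrite (sumsmx_sup k) //.
  by apply/bigcupP; exists i.
apply/sumsmx_subP => k /bigcupP[i i_s kNi]; rewrite (sumsmx_sup i) // !genmxE.
by rewrite trEsel_eqmx (sumsmx_sup k) ?genmxE.
Qed.

Lemma Cspace_Cbar s :
  (Cspace (fun i => cmx (Cbar nn nbr C i)) s :=:
   block_mx (Cspace (fun i => cmx (C i)) s) 0 0 (Eproj (Nsetof nbr s)))%MS.
Proof.
rewrite /Cspace (eq_bigr (fun i =>
  <<block_mx (cmx (C i)) 0 0 (Esel R[i] nn (Nset nbr i))^T>>%MS)).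
  apply: eqmx_trans (sumsmx_diag_block _ _ _) _.
  exact: diag_block_eqmx (eqmx_refl _) (sum_trEsel_eqmx s).
by move=> i _; rewrite cmx_Cbar.
Qed.

Lemma extended_pbh_rank s lam :
  \rank (block_mx (lam%:M - cmx (Abar nn A))
                  (Bspace (fun i => cmx (Bbar nn B i)) s)^T
                  (Cspace (fun i => cmx (Cbar nn nbr C i)) (~: s)) 0) =
  (pbh_rank A B C s lam + nu + \rank (Eproj (Nsetof nbr (~: s) :&: s)))%N.
Proof.
have sCs_N : ~: s \subset Nsetof nbr (~: s).
  by apply/subsetP => i i_s; apply/bigcupP; exists i; rewrite // /Nset setU11.
have -> : (pbh_rank A B C s lam + nu + \rank (Eproj (Nsetof nbr (~: s) :&: s)) =
          pbh_rank A B C s lam +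
          \rank (block_mx lam%:M (Eproj s) (Eproj (Nsetof nbr (~: s))) 0))%N.
  by rewrite mxrank_Eproj_block // addnA.
rewrite pbh_rankE -mxrank_block0_diag cmx_Abar.
apply: mxrank_block0_eqmx; last exact: Cspace_Cbar.
rewrite !trmxK tr_block_mx !trmx0 trmxK Eproj_tr; exact: Bspace_Bbar.
Qed.

End ExtendedSystem.

Unset Implicit Arguments.

Theorem theorem3 (R : realType) (n m : nat) (p q : 'I_m -> nat)
  (A : 'M[R]_n) (B : forall i : 'I_m, 'M[R]_(n, p i))
  (C : forall i : 'I_m, 'M[R]_(q i, n))
  (nbr : 'I_m -> {set 'I_m}) (nn : 'I_m -> nat) :
  controllable A (\mxrow_(i < m) B i) ->
  observable (\mxcol_(i < m) C i) A ->
  weakly_connected nbr ->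
  (forall i : 'I_m, forall (s : {set 'I_m}) (lam : R[i]),
      spec A lam -> (n <= nn i + pbh_rank A B C s lam)%N) ->
  (no_fixed_spectrum (Abar nn A) (Bbar nn B) (Cbar nn nbr C)
   <->
   (forall s : {set 'I_m},
      (exists lam : R[i], spec A lam /\ (pbh_rank A B C s lam < n)%N) ->
      Nsetof nbr (~: s) :&: s != set0)).
Proof.
move=> _ _ _ nn_ge.
split=> [no_fixed s [lam [_ pbh_lt]] | nonempty [lam /fixed_eigP[s]]].
  apply/negP => /eqP Ns_s0; apply: no_fixed; exists lam; apply/fixed_eigP; exists s.
  by rewrite extended_pbh_rank Ns_s0 Eproj0 mxrank0 addn0 ltn_add2r.
rewrite extended_pbh_rank.
have [le_n_pbh | pbh_lt] := leqP n (pbh_rank A B C s lam); first lia.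
have spec_lam := pbh_rank_lt_spec pbh_lt.
have [k kNs] := set0Pn _ (nonempty s (ex_intro _ lam (conj spec_lam pbh_lt))).
have := mxrank_Eproj_ge R[i] nn kNs; have := nn_ge k s lam spec_lam; lia.
Qed.
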